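(* Let $n\ge1$, $\delta_1\in[0,1)$, $\delta_2\ge0$, and assume $n\ge2$, or $n=1$ and $\delta_1\in[0,1/2)$. Then there is $\lambda>0$ such that \[ \int_{[-1,1]^n}\Big(|x|^{2\delta_1}|\nabla\psi(x)|^2+(\pi/2)^2|x|^{2\delta_2}\psi(x)^2\Big)dx\ \ge\ \lambda\int_{[-1,1]^n}\psi(x)^2\,dx \] for all $\psi\in C_c^1(\mathbb R^n)$.
   Context: $|x|$ denotes the Euclidean norm of $x\in\mathbb R^n$. *)

From Stdlib Require Import Reals Lra.
Open Scope R_scope.

(* Points of R^n are encoded as x : nat -> R whose coordinates i >= n vanish. *)
Definition in_Rn (n : nat) (x : nat -> R) : Prop := forall i, (n <= i)%nat -> x i = 0.

Fixpoint sumN (N : nat) (f : nat -> R) : R :=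
  match N with O => 0 | S k => sumN k f + f k end.

Definition normn (n : nat) (x : nat -> R) : R := sqrt (sumN n (fun i => x i ^ 2)).

Definition upd (x : nat -> R) (m : nat) (t : R) : nat -> R :=
  fun i => if Nat.eqb i m then t else x i.

(* r^a for r >= 0, a >= 0, with the convention 0^0 = 1, 0^a = 0 for a > 0 *)
Definition rpow (r a : R) : R :=
  if Req_EM_T r 0 then (if Req_EM_T a 0 then 1 else 0) else Rpower r a.

(* psi in C_c^1(R^n) with gradient Dpsi (Dpsi x i = i-th partial derivative at x) *)
Definition C1c (n : nat) (psi : (nat -> R) -> R) (Dpsi : (nat -> R) -> nat -> R) : Prop :=
  (forall x, in_Rn n x -> forall i, (i < n)%nat ->
      derivable_pt_lim (fun t => psi (upd x i t)) (x i) (Dpsi x i)) /\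
  (forall x, in_Rn n x -> forall i, (i < n)%nat -> forall eps, 0 < eps ->
      exists d, 0 < d /\ forall y, in_Rn n y ->
        normn n (fun j => y j - x j) < d -> Rabs (Dpsi y i - Dpsi x i) < eps) /\
  (exists M, forall x, in_Rn n x -> M < normn n x -> psi x = 0).

(* midpoint of the k-th of N equal subintervals of [-1,1] *)
Definition mid (N k : nat) : R := -1 + (2 * INR k + 1) / INR N.

(* sum of g over the midpoints of the uniform grid with N^m cells in coordinates 0..m-1 *)
Fixpoint gridsum (m N : nat) (g : (nat -> R) -> R) : R :=
  match m with
  | O => g (fun _ => 0)
  | S m' => sumN N (fun k => gridsum m' N (fun x => g (upd x m' (mid N k))))
  end.

(* cube_int n g l : the (Riemann) integral of g over [-1,1]^n equals l,
   as the limit of midpoint Riemann sums on uniform grids. *)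
Definition cube_int (n : nat) (g : (nat -> R) -> R) (l : R) : Prop :=
  Un_cv (fun N => (2 / INR (S N)) ^ n * gridsum n (S N) g) l.

(* The inequality is proved with the explicit constant
   [lam = 1 / (64 + 8 / ((PI/2)^2 (1/4)^(2 d2)))], by a Hardy inequality along
   the lines parallel to the first coordinate axis.  On such a line through a point
   [x] of the cube, write [s] for the first coordinate.  Since [|s| <= |x|] and
   [|s| <= 1], the weight [|x|^(2 d1)] dominates [s^2] (this only uses [d1 <= 1]),
   and where [|s| >= 1/4] the weight [|x|^(2 d2)] is at least [(1/4)^(2 d2)].  So it
   suffices to prove the one-dimensional inequality
       int_{-1}^{1} f^2  <=  C (int s^2 f'^2 + int_{|s| >= 1/4} f^2),
   which follows from integrating [(F f^2)'] for a zigzag weight [F] equal to [s]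
   near 0 and vanishing at the ends, and absorbing the cross term by Young's
   inequality. *)

From Stdlib Require Import Reals Lra Lia.
From Stdlib Require Import Classical ClassicalEpsilon FunctionalExtensionality.
From Coquelicot Require Import Compactness.
Open Scope R_scope.

Lemma sumN_ext (N : nat) (f g : nat -> R) :
  (forall k, (k < N)%nat -> f k = g k) -> sumN N f = sumN N g.
Proof.
  induction N as [|N IH]; intros H; simpl; auto.
  rewrite IH by (intros; apply H; lia). rewrite H by lia. reflexivity.
Qed.

Lemma sumN_le (N : nat) (f g : nat -> R) :
  (forall k, (k < N)%nat -> f k <= g k) -> sumN N f <= sumN N g.
Proof.
  induction N as [|N IH]; intros H; simpl; [lra|].
  assert (sumN N f <= sumN N g) by (apply IH; intros; apply H; lia).
  assert (f N <= g N) by (apply H; lia). lra.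
Qed.

Lemma sumN_lt (N : nat) (f g : nat -> R) :
  (1 <= N)%nat -> (forall k, (k < N)%nat -> f k < g k) -> sumN N f < sumN N g.
Proof.
  induction N as [|N IH]; intros HN H; [lia|]. simpl.
  assert (f N < g N) by (apply H; lia).
  destruct N as [|N]; [simpl; lra|].
  assert (sumN (S N) f < sumN (S N) g) by (apply IH; [lia| intros; apply H; lia]). lra.
Qed.

Lemma sumN_plus (N : nat) (f g : nat -> R) :
  sumN N (fun k => f k + g k) = sumN N f + sumN N g.
Proof. induction N as [|N IH]; simpl; [lra|]. rewrite IH. ring. Qed.

Lemma sumN_minus (N : nat) (f g : nat -> R) :
  sumN N (fun k => f k - g k) = sumN N f - sumN N g.
Proof. induction N as [|N IH]; simpl; [lra|]. rewrite IH. ring. Qed.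

Lemma sumN_scal (N : nat) (a : R) (f : nat -> R) :
  sumN N (fun k => a * f k) = a * sumN N f.
Proof. induction N as [|N IH]; simpl; [lra|]. rewrite IH. ring. Qed.

Lemma sumN_const (N : nat) (c : R) : sumN N (fun _ => c) = INR N * c.
Proof. induction N as [|N IH]; simpl sumN; [simpl; lra|]. rewrite IH, S_INR. ring. Qed.

Lemma sumN_telescope (m : nat) (u : nat -> R) :
  sumN m (fun k => u (S k) - u k) = u m - u O.
Proof. induction m as [|m IH]; simpl; [lra|]. rewrite IH. ring. Qed.

Lemma sumN_nonneg (N : nat) (f : nat -> R) :
  (forall k, (k < N)%nat -> 0 <= f k) -> 0 <= sumN N f.
Proof.
  intros H. replace 0 with (sumN N (fun _ => 0)) by (rewrite sumN_const; ring).
  apply sumN_le; auto.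
Qed.

Lemma sumN_ge_first (N : nat) (f : nat -> R) :
  (1 <= N)%nat -> (forall k, (k < N)%nat -> 0 <= f k) -> f O <= sumN N f.
Proof.
  induction N as [|N IH]; intros HN H; [lia|]. simpl.
  assert (0 <= f N) by (apply H; lia).
  destruct N as [|N]; [simpl; lra|].
  assert (f O <= sumN (S N) f) by (apply IH; [lia| intros; apply H; lia]). lra.
Qed.

Lemma sumN_pairs_ge (m : nat) (a : nat -> R) :
  (1 <= m)%nat -> (forall k, (k <= m)%nat -> 0 <= a k) ->
  sumN (S m) a <= sumN m (fun k => a k + a (S k)).
Proof.
  induction m as [|m IH]; intros Hm H; [lia|].
  destruct m as [|m]; [simpl; lra|].
  change (sumN (S (S m)) a + a (S (S m)) <=
          sumN (S m) (fun k => a k + a (S k)) + (a (S m) + a (S (S m)))).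
  assert (sumN (S (S m)) a <= sumN (S m) (fun k => a k + a (S k)))
    by (apply IH; [lia| intros; apply H; lia]).
  assert (0 <= a (S m)) by (apply H; lia). lra.
Qed.

Lemma sumN_pairs_le (m : nat) (a : nat -> R) :
  (forall k, (k <= m)%nat -> 0 <= a k) ->
  sumN m (fun k => a k + a (S k)) <= 2 * sumN (S m) a.
Proof.
  intros H.
  assert (E : sumN m (fun k => a k + a (S k)) + a O + a m = 2 * sumN (S m) a).
  { clear H. induction m as [|m IH]; simpl sumN in *; simpl; lra. }
  assert (0 <= a O) by (apply H; lia). assert (0 <= a m) by (apply H; lia). lra.
Qed.

Lemma mid_S (N k : nat) : (N <> 0)%nat -> mid N (S k) = mid N k + 2 / INR N.
Proof.
  intros HN. unfold mid. rewrite S_INR.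
  assert (INR N <> 0) by (apply not_0_INR; auto). field; auto.
Qed.

Lemma mid_bounds (N k : nat) : (k < N)%nat -> -1 + 1 / INR N <= mid N k <= 1 - 1 / INR N.
Proof.
  intros Hk. unfold mid.
  assert (HN : 0 < INR N) by (apply lt_0_INR; lia).
  assert (HkN : INR k + 1 <= INR N) by (rewrite <- S_INR; apply le_INR; lia).
  assert (0 <= INR k) by apply pos_INR.
  assert (E : 1 - 1 / INR N = -1 + (2 * INR N - 1) / INR N) by (field; lra).
  rewrite E. unfold Rdiv. assert (0 < / INR N) by (apply Rinv_0_lt_compat; auto).
  split; apply Rplus_le_compat_l; apply Rmult_le_compat_r; lra.
Qed.

Lemma mid_in (N k : nat) : (k < N)%nat -> -1 <= mid N k <= 1.
Proof.
  intros Hk. destruct (mid_bounds N k Hk).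
  assert (0 < 1 / INR N) by (apply Rdiv_lt_0_compat; [lra| apply lt_0_INR; lia]). lra.
Qed.

Lemma mid_first (m : nat) : mid (S m) O = -(1 - 1 / INR (S m)).
Proof.
  unfold mid. simpl INR at 1. assert (INR (S m) <> 0) by (apply not_0_INR; auto).
  field; auto.
Qed.

Lemma mid_last (m : nat) : mid (S m) m = 1 - 1 / INR (S m).
Proof.
  unfold mid. rewrite S_INR. assert (INR m + 1 <> 0) by (generalize (pos_INR m); lra).
  field; auto.
Qed.

(** * A discrete one-dimensional Hardy inequality *)

Lemma sq_le_abs (a b : R) : Rabs a <= Rabs b -> a ^ 2 <= b ^ 2.
Proof.
  intros H. rewrite <- (pow2_abs a), <- (pow2_abs b).
  assert (0 <= Rabs a) by apply Rabs_pos. nra.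
Qed.

(* The zigzag weight: the identity on [-c0/2, c0/2], continued with slope -1
   so that it vanishes at [-c0] and [c0]. *)
Definition zigzag (c0 u : R) : R :=
  if Rle_dec u (-(c0/2)) then -c0 - u else if Rle_dec u (c0/2) then u else c0 - u.

Lemma zigzag_abs (c0 u : R) : 0 <= c0 -> Rabs (zigzag c0 u) <= Rabs u.
Proof.
  intros. unfold zigzag; destruct (Rle_dec u (-(c0/2))); [|destruct (Rle_dec u (c0/2))];
  unfold Rabs; repeat destruct Rcase_abs; lra.
Qed.

Lemma zigzag_step_lower (c0 u v : R) : 0 <= c0 -> u <= v -> zigzag c0 v - zigzag c0 u >= -(v - u).
Proof.
  intros. unfold zigzag; destruct (Rle_dec u (-(c0/2))); destruct (Rle_dec v (-(c0/2)));
  try destruct (Rle_dec u (c0/2)); try destruct (Rle_dec v (c0/2)); lra.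
Qed.

Lemma zigzag_step_middle (c0 u v : R) :
  Rabs u <= c0/2 -> Rabs v <= c0/2 -> zigzag c0 v - zigzag c0 u = v - u.
Proof.
  intros Hu Hv. unfold Rabs in *; repeat destruct Rcase_abs in *; unfold zigzag;
  destruct (Rle_dec u (-(c0/2))); destruct (Rle_dec v (-(c0/2)));
  try destruct (Rle_dec u (c0/2)); try destruct (Rle_dec v (c0/2)); lra.
Qed.

Lemma zigzag_ends (c0 : R) : 0 < c0 -> zigzag c0 (- c0) = 0 /\ zigzag c0 c0 = 0.
Proof.
  intros. unfold zigzag. split.
  - destruct (Rle_dec (- c0) (-(c0/2))); lra.
  - destruct (Rle_dec c0 (-(c0/2))); [lra|]. destruct (Rle_dec c0 (c0/2)); lra.
Qed.

(* Indicator of the region [|u| >= 1/4], away from the singularity of the weight. *)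
Definition outer (u : R) : R := if Rle_dec (1/4) (Rabs u) then 1 else 0.

Lemma outer_nonneg (u : R) : 0 <= outer u.
Proof. unfold outer. destruct Rle_dec; lra. Qed.

(* One step of the summation by parts [sum (F f^2)' = 0]: with [f1 - f0 = h (gj + e)],
   the increment [F1 f1^2 - F0 f0^2] splits as [(F1-F0) (f0^2+f1^2)/2] (at least
   [h/2 (f0^2+f1^2)] up to outer terms) plus a cross term [h M (gj+e) (f0+f1)]
   controlled by Young's inequality. *)
Lemma hardy_step (h F0 F1 f0 f1 tj gj e om q0 q1 : R) :
  0 < h -> 0 <= q0 -> 0 <= q1 ->
  f1 - f0 = h * (gj + e) -> F1 - F0 >= -h ->
  (F1 - F0 <> h -> f0 ^ 2 <= q0 /\ f1 ^ 2 <= q1) ->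
  Rabs ((F0 + F1) / 2) <= Rabs tj -> Rabs tj <= 1 -> Rabs e <= om ->
  F1 * f1 ^ 2 - F0 * f0 ^ 2 >=
  h * (3/8 * (f0 ^ 2 + f1 ^ 2) - (q0 + q1) - 8 * (tj ^ 2 * gj ^ 2) - 8 * om ^ 2).
Proof.
  intros Hh Hq0 Hq1 Hf HD Hout HM Htj He.
  set (D := F1 - F0) in *. set (M := (F0 + F1) / 2) in *. set (a := gj + e) in *.
  assert (Split : F1 * f1 ^ 2 - F0 * f0 ^ 2 = D / 2 * (f0 ^ 2 + f1 ^ 2) + h * (M * a * (f0 + f1))).
  { replace f1 with (f0 + h * a) by lra. unfold D, M. field. }
  assert (Weight : D / 2 * (f0 ^ 2 + f1 ^ 2) >= h / 2 * (f0 ^ 2 + f1 ^ 2) - h * (q0 + q1)).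
  { assert (0 <= f0 ^ 2) by apply pow2_ge_0. assert (0 <= f1 ^ 2) by apply pow2_ge_0.
    destruct (Req_dec D h) as [E|E]; [rewrite E; nra|].
    destruct (Hout E). nra. }
  assert (Ma2 : (M * a) ^ 2 <= 2 * (tj ^ 2 * gj ^ 2) + 2 * om ^ 2).
  { assert (M ^ 2 <= tj ^ 2) by (apply sq_le_abs; auto).
    assert (tj ^ 2 <= 1) by (replace 1 with (1 ^ 2) by ring; apply sq_le_abs; rewrite Rabs_R1; auto).
    assert (e ^ 2 <= om ^ 2).
    { apply sq_le_abs. assert (0 <= Rabs e) by apply Rabs_pos. rewrite (Rabs_right om); lra. }
    assert (a ^ 2 <= 2 * gj ^ 2 + 2 * e ^ 2) by (assert (0 <= (gj - e) ^ 2) by apply pow2_ge_0; unfold a; nra).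
    assert (0 <= M ^ 2) by apply pow2_ge_0. assert (0 <= a ^ 2) by apply pow2_ge_0.
    assert (0 <= gj ^ 2) by apply pow2_ge_0. assert (0 <= e ^ 2) by apply pow2_ge_0.
    assert (M ^ 2 * a ^ 2 <= tj ^ 2 * (2 * gj ^ 2 + 2 * e ^ 2)) by (apply Rmult_le_compat; lra).
    replace ((M * a) ^ 2) with (M ^ 2 * a ^ 2) by ring. nra. }
  assert (Cross : M * a * (f0 + f1) >=
                  - (8 * (tj ^ 2 * gj ^ 2) + 8 * om ^ 2 + (f0 ^ 2 + f1 ^ 2) / 8)).
  { assert (0 <= (2 * (M * a) + (f0 + f1) / 4) ^ 2) by apply pow2_ge_0.
    assert (0 <= (f0 - f1) ^ 2) by apply pow2_ge_0. nra. }
  rewrite Split. nra.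
Qed.

(* Summing the steps: the left-hand sides telescope to [F m a m - F 0 a 0 = 0],
   which bounds [sum a] by the weighted terms [p], the outer terms [q] and the error. *)
Lemma telescoped_bound (m : nat) (h om : R) (F a p q : nat -> R) :
  (1 <= m)%nat -> 0 < h -> F O = 0 -> F m = 0 ->
  (forall k, (k <= m)%nat -> 0 <= a k /\ 0 <= p k /\ 0 <= q k) ->
  (forall k, (k < m)%nat -> F (S k) * a (S k) - F k * a k >=
     h * (3/8 * (a k + a (S k)) - (q k + q (S k)) - 8 * (p k + p (S k)) - 8 * om ^ 2)) ->
  sumN (S m) a <= 64 * sumN (S m) p + 8 * sumN (S m) q + 32 * INR (S m) * om ^ 2.
Proof.
  intros Hm Hh HF0 HFm Hpos Hstep.
  assert (Hsum := sumN_le m _ _ (fun k Hk => Rge_le _ _ (Hstep k Hk))).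
  rewrite (sumN_telescope m (fun k => F k * a k)), HF0, HFm in Hsum.
  rewrite sumN_scal, !sumN_minus, !sumN_scal, sumN_const in Hsum.
  set (A2 := sumN m (fun k => a k + a (S k))) in *.
  set (Q2 := sumN m (fun k => q k + q (S k))) in *.
  set (P2 := sumN m (fun k => p k + p (S k))) in *.
  assert (Hbr : 3/8 * A2 - Q2 - 8 * P2 - 8 * (INR m * om ^ 2) <= 0).
  { apply Rmult_le_reg_l with h; [auto| lra]. }
  assert (sumN (S m) a <= A2) by (apply sumN_pairs_ge; auto; apply Hpos).
  assert (Q2 <= 2 * sumN (S m) q) by (apply sumN_pairs_le; apply Hpos).
  assert (P2 <= 2 * sumN (S m) p) by (apply sumN_pairs_le; apply Hpos).
  assert (0 <= sumN (S m) q) by (apply sumN_nonneg; intros; apply Hpos; lia).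
  assert (0 <= sumN (S m) p) by (apply sumN_nonneg; intros; apply Hpos; lia).
  assert (INR m <= INR (S m)) by (apply le_INR; lia).
  assert (0 <= om ^ 2) by apply pow2_ge_0.
  assert (INR m * om ^ 2 <= INR (S m) * om ^ 2) by (apply Rmult_le_compat_r; auto).
  assert (0 <= INR (S m) * om ^ 2) by (apply Rmult_le_pos; [apply pos_INR| auto]).
  lra.
Qed.

Section DiscreteHardy.

(* The grid [t k = mid N k], k <= m, has step [h = 2/N]; the weight is the zigzag
   with corners at the extreme midpoints [-c0] and [c0]. *)
Variable m : nat.
Hypothesis m_large : (15 <= m)%nat.

Let N := S m.
Let h := 2 / INR N.
Let c0 := 1 - 1 / INR N.
Let t := mid N.
Let F (k : nat) : R := zigzag c0 (t k).

(* For [m >= 15] the step is small and the zigzag corners [c0/2] lie beyond [1/4 + h]. *)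
Lemma grid_constants : 0 < h <= 1/8 /\ 15/16 <= c0.
Proof.
  assert (HN : 16 <= INR N) by (replace 16 with (INR 16) by (simpl; lra); apply le_INR; unfold N; lia).
  unfold h, c0. split; [split|].
  - apply Rdiv_lt_0_compat; lra.
  - apply Rmult_le_reg_r with (INR N); [lra|]. unfold Rdiv. rewrite Rmult_assoc, Rinv_l; lra.
  - enough (1 / INR N <= 1/16) by lra.
    apply Rmult_le_reg_r with (INR N); [lra|]. unfold Rdiv. rewrite Rmult_assoc, Rinv_l; lra.
Qed.

Lemma grid_step (k : nat) : t (S k) = t k + h.
Proof. apply mid_S. unfold N. lia. Qed.

(* The zigzag vanishes at the extreme grid points, so the telescoping sum is 0. *)
Lemma weight_ends : F O = 0 /\ F m = 0.
Proof.
  destruct grid_constants. unfold F, t, N. rewrite mid_first, mid_last.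
  apply zigzag_ends. fold N c0. lra.
Qed.

Lemma weight_step_lower (k : nat) : F (S k) - F k >= -h.
Proof.
  destruct grid_constants. unfold F. rewrite grid_step.
  generalize (zigzag_step_lower c0 (t k) (t k + h)). lra.
Qed.

(* Near the origin the weight is the identity, so it increases by exactly [h]. *)
Lemma weight_step_inner (k : nat) :
  Rabs (t k) < 1/4 \/ Rabs (t (S k)) < 1/4 -> F (S k) - F k = h.
Proof.
  intros Hk. destruct grid_constants. unfold F.
  rewrite grid_step in *. rewrite zigzag_step_middle; [ring| |];
  revert Hk; unfold Rabs; repeat destruct Rcase_abs; lra.
Qed.

(* The mean weight on a step is bounded by the grid values, as [|zigzag u| <= |u|]. *)
Lemma weight_mean (k : nat) (r : R) :
  Rabs (t k) <= r -> Rabs (t (S k)) <= r -> Rabs ((F k + F (S k)) / 2) <= r.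
Proof.
  intros H0 H1. destruct grid_constants.
  assert (Rabs (F k) <= Rabs (t k)) by (apply zigzag_abs; lra).
  assert (Rabs (F (S k)) <= Rabs (t (S k))) by (apply zigzag_abs; lra).
  unfold Rdiv. rewrite Rabs_mult, (Rabs_right (/2)) by lra.
  generalize (Rabs_triang (F k) (F (S k))). lra.
Qed.

Theorem discrete_hardy (f g : nat -> R) (om : R) :
  (forall k, (k < m)%nat -> exists e j, Rabs e <= om /\ (j = k \/ j = S k) /\
      Rabs (t k) <= Rabs (t j) /\ Rabs (t (S k)) <= Rabs (t j) /\
      f (S k) - f k = h * (g j + e)) ->
  sumN N (fun k => f k ^ 2) <=
    64 * sumN N (fun k => t k ^ 2 * g k ^ 2) + 8 * sumN N (fun k => outer (t k) * f k ^ 2)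
    + 32 * INR N * om ^ 2.
Proof.
  intros Hinc. destruct grid_constants as [[Hh _] _].
  destruct weight_ends as [F0 Fm].
  apply (telescoped_bound m h om F); auto; [lia| |].
  { intros k _. repeat split;
      [apply pow2_ge_0| apply Rmult_le_pos; apply pow2_ge_0| apply Rmult_le_pos; [apply outer_nonneg| apply pow2_ge_0]]. }
  intros k Hk. destruct (Hinc k Hk) as (e & j & He & Hj & Hkj & HSkj & Hf).
  assert (Htj : Rabs (t j) <= 1).
  { destruct (mid_in N j) as [? ?]; [unfold N; lia|]. unfold t, Rabs; destruct Rcase_abs; lra. }
  assert (Hpj : t j ^ 2 * g j ^ 2 <= t k ^ 2 * g k ^ 2 + t (S k) ^ 2 * g (S k) ^ 2).
  { assert (0 <= t k ^ 2 * g k ^ 2) by (apply Rmult_le_pos; apply pow2_ge_0).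
    assert (0 <= t (S k) ^ 2 * g (S k) ^ 2) by (apply Rmult_le_pos; apply pow2_ge_0).
    destruct Hj; subst j; lra. }
  assert (Step := hardy_step h (F k) (F (S k)) (f k) (f (S k)) (t j) (g j) e om
                    (outer (t k) * f k ^ 2) (outer (t (S k)) * f (S k) ^ 2)).
  enough (F (S k) * f (S k) ^ 2 - F k * f k ^ 2 >= h * (3/8 * (f k ^ 2 + f (S k) ^ 2)
            - (outer (t k) * f k ^ 2 + outer (t (S k)) * f (S k) ^ 2)
            - 8 * (t j ^ 2 * g j ^ 2) - 8 * om ^ 2)) by nra.
  apply Step; auto using weight_step_lower, weight_mean.
  - apply Rmult_le_pos; [apply outer_nonneg| apply pow2_ge_0].
  - apply Rmult_le_pos; [apply outer_nonneg| apply pow2_ge_0].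
  - intros HD. unfold outer.
    destruct (Rle_dec (1/4) (Rabs (t k))); [|exfalso; apply HD, weight_step_inner; lra].
    destruct (Rle_dec (1/4) (Rabs (t (S k)))); [|exfalso; apply HD, weight_step_inner; lra].
    lra.
Qed.

End DiscreteHardy.

Definition cube (n : nat) (x : nat -> R) : Prop :=
  in_Rn n x /\ forall i, (i < n)%nat -> -1 <= x i <= 1.

Lemma upd_eq (x : nat -> R) (i : nat) (a : R) : upd x i a i = a.
Proof. unfold upd. rewrite Nat.eqb_refl. reflexivity. Qed.

Lemma upd_upd (x : nat -> R) (i : nat) (a b : R) : upd (upd x i a) i b = upd x i b.
Proof. apply functional_extensionality; intros k; unfold upd. destruct (Nat.eqb k i); auto. Qed.

Lemma upd_comm (x : nat -> R) (i j : nat) (a b : R) :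
  i <> j -> upd (upd x i a) j b = upd (upd x j b) i a.
Proof.
  intros H. apply functional_extensionality. intros k. unfold upd.
  destruct (Nat.eqb_spec k j); destruct (Nat.eqb_spec k i); subst; auto. contradiction.
Qed.

Lemma cube_upd (n : nat) (x : nat -> R) (i : nat) (a : R) :
  cube n x -> (i < n)%nat -> -1 <= a <= 1 -> cube n (upd x i a).
Proof.
  intros [Hx Hb] Hi Ha. split; intros k Hk; unfold upd; destruct (Nat.eqb_spec k i); auto; lia.
Qed.

Lemma cube_zero (n : nat) : cube n (fun _ => 0).
Proof. split; [intros i _; auto| intros; lra]. Qed.

Lemma gridsum_by_lines (n N m : nat) (A B : (nat -> R) -> R) : (1 <= m <= n)%nat ->
  (forall x, cube n x -> sumN N (fun k => B (upd x O (mid N k))) <= sumN N (fun k => A (upd x O (mid N k)))) ->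
  gridsum m N B <= gridsum m N A.
Proof.
  revert A B. induction m as [|m IH]; intros A B Hm H; [lia|].
  destruct m as [|m]; [apply H, cube_zero|].
  change (sumN N (fun k => gridsum (S m) N (fun x => B (upd x (S m) (mid N k)))) <=
          sumN N (fun k => gridsum (S m) N (fun x => A (upd x (S m) (mid N k))))).
  apply sumN_le. intros k Hk. apply IH; [lia|]. intros x Hx.
  rewrite !(sumN_ext N (fun k0 => _ (upd (upd x O (mid N k0)) (S m) (mid N k)))
                       (fun k0 => _ (upd (upd x (S m) (mid N k)) O (mid N k0))))
    by (intros; rewrite upd_comm; auto).
  apply H, cube_upd; auto; [lia| apply mid_in; auto].
Qed.

Lemma gridsum_affine (m N : nat) (g : (nat -> R) -> R) (a b : R) :
  gridsum m N (fun x => a * g x + b) = a * gridsum m N g + b * INR N ^ m.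
Proof.
  revert g. induction m as [|m IH]; intros g; simpl gridsum; [simpl; ring|].
  rewrite (sumN_ext N _ (fun k => a * gridsum m N (fun x => g (upd x m (mid N k))) + b * INR N ^ m))
    by (intros k _; apply (IH (fun x => g (upd x m (mid N k))))).
  rewrite sumN_plus, sumN_scal, sumN_const. simpl. ring.
Qed.

Lemma normn_coord0 (n : nat) (x : nat -> R) : (1 <= n)%nat -> Rabs (x O) <= normn n x.
Proof.
  intros Hn. unfold normn. rewrite <- (sqrt_pow2 (Rabs (x O))) by apply Rabs_pos.
  apply sqrt_le_1_alt. rewrite pow2_abs.
  apply (sumN_ge_first n (fun i => x i ^ 2)); auto. intros; apply pow2_ge_0.
Qed.

Lemma normn_small (n : nat) (v : nat -> R) (d : R) : (1 <= n)%nat -> 0 < d ->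
  (forall i, (i < n)%nat -> Rabs (v i) < d / INR n) -> normn n v < d.
Proof.
  intros Hn Hd H. assert (HN : 1 <= INR n) by (replace 1 with (INR 1) by reflexivity; apply le_INR; auto).
  assert (Hs : sumN n (fun i => v i ^ 2) < sumN n (fun _ => (d / INR n) ^ 2)).
  { apply sumN_lt; auto. intros i Hi. specialize (H i Hi). rewrite <- pow2_abs.
    assert (0 <= Rabs (v i)) by apply Rabs_pos. nra. }
  rewrite sumN_const in Hs.
  assert (E : INR n * (d / INR n) ^ 2 = d ^ 2 / INR n) by (field; lra).
  assert (d ^ 2 / INR n <= d ^ 2).
  { unfold Rdiv. assert (0 < d ^ 2) by (apply pow_lt; auto).
    assert (/ INR n <= 1) by (rewrite <- Rinv_1; apply Rinv_le_contravar; lra). nra. }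
  unfold normn. rewrite <- (sqrt_pow2 d) by lra. apply sqrt_lt_1_alt. split; [|lra].
  apply sumN_nonneg. intros; apply pow2_ge_0.
Qed.

(** * Uniform continuity on the cube *)

(* Transport between [nat -> R] and the tuples [Tn n R] of Coquelicot's compactness lemma. *)
Fixpoint toT (n : nat) (x : nat -> R) : Tn n R :=
  match n with O => tt | S m => (x O, toT m (fun i => x (S i))) end.

Fixpoint ofT (n : nat) : Tn n R -> nat -> R :=
  match n with
  | O => fun _ _ => 0
  | S m => fun t i => match i with O => fst t | S i' => ofT m (snd t) i' end
  end.

Fixpoint cstT (n : nat) (c : R) : Tn n R :=
  match n with O => tt | S m => (c, cstT m c) end.

Lemma ofT_cube (n : nat) (t : Tn n R) : bounded_n n (cstT n (-1)) (cstT n 1) t -> cube n (ofT n t).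
Proof.
  revert t. induction n as [|n IH]; intros t H; split; intros i Hi; [reflexivity| lia| |];
  destruct t as [t1 t2], H as [H1 H2], i as [|i]; simpl; auto; try lia;
  apply (IH t2 H2); lia.
Qed.

Lemma toT_bounded (n : nat) (x : nat -> R) : cube n x -> bounded_n n (cstT n (-1)) (cstT n 1) (toT n x).
Proof.
  intros [_ H]. revert x H. induction n as [|n IH]; intros x H; simpl; auto.
  split; [apply H; lia|]. apply IH. intros; apply H; lia.
Qed.

Lemma toT_close (n : nat) (d : R) (x : nat -> R) (t : Tn n R) :
  close_n n d (toT n x) t -> forall i, (i < n)%nat -> Rabs (x i - ofT n t i) < d.
Proof.
  revert x t. induction n as [|n IH]; intros x t H i Hi; [lia|].
  destruct t as [t1 t2], H as [H1 H2], i as [|i]; simpl; auto. apply (IH (fun i => x (S i))); auto. lia.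
Qed.

Lemma heine (n : nat) (u : (nat -> R) -> R) :
  (forall z, cube n z -> forall eps, 0 < eps -> exists del, 0 < del /\ forall y, cube n y ->
      (forall i, (i < n)%nat -> Rabs (y i - z i) < del) -> Rabs (u y - u z) < eps) ->
  forall eps, 0 < eps -> exists d, 0 < d /\ forall x y, cube n x -> cube n y ->
      (forall i, (i < n)%nat -> Rabs (y i - x i) < d) -> Rabs (u y - u x) < eps.
Proof.
  intros Hc eps Heps.
  assert (Hloc : forall t : Tn n R, exists del, 0 < del /\ (cube n (ofT n t) -> forall y, cube n y ->
      (forall i, (i < n)%nat -> Rabs (y i - ofT n t i) < del) -> Rabs (u y - u (ofT n t)) < eps / 2)).
  { intros t. destruct (classic (cube n (ofT n t))) as [C|C].
    - destruct (Hc _ C (eps/2) ltac:(lra)) as [del [Hd Hd']]. exists del; auto.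
    - exists 1. split; [lra|]. intros; contradiction. }
  destruct (choice _ Hloc) as [gd Hgd].
  set (delta := fun t => mkposreal (gd t / 2) ltac:(destruct (Hgd t); lra)).
  destruct (compactness_value n (cstT n (-1)) (cstT n 1) delta) as [d Hd].
  exists d. split; [apply cond_pos|]. intros x y Hx Hy Hxy.
  apply NNPP. intros Hfar. apply (Hd (toT n x) (toT_bounded n x Hx)).
  intros [t [Hbt [Hct Hdt]]]. apply Hfar. simpl in Hct, Hdt.
  destruct (Hgd t) as [Hp Hq]. assert (Hz := ofT_cube n t Hbt).
  assert (Hxz := toT_close n _ x t Hct).
  assert (A1 : Rabs (u x - u (ofT n t)) < eps / 2).
  { apply Hq; auto. intros i Hi. specialize (Hxz i Hi). lra. }
  assert (A2 : Rabs (u y - u (ofT n t)) < eps / 2).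
  { apply Hq; auto. intros i Hi. specialize (Hxz i Hi). specialize (Hxy i Hi).
    replace (y i - ofT n t i) with ((y i - x i) + (x i - ofT n t i)) by ring.
    generalize (Rabs_triang (y i - x i) (x i - ofT n t i)). lra. }
  assert (T := Rabs_triang (u y - u (ofT n t)) (- (u x - u (ofT n t)))).
  rewrite Rabs_Ropp in T.
  replace (u y - u x) with ((u y - u (ofT n t)) + - (u x - u (ofT n t))) by ring. lra.
Qed.

Lemma partial_uniform_continuity (n : nat) (Dpsi : (nat -> R) -> nat -> R) :
  (1 <= n)%nat ->
  (forall x, in_Rn n x -> forall i, (i < n)%nat -> forall eps, 0 < eps ->
      exists d, 0 < d /\ forall y, in_Rn n y ->
        normn n (fun j => y j - x j) < d -> Rabs (Dpsi y i - Dpsi x i) < eps) ->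
  forall om, 0 < om -> exists d, 0 < d /\ forall x y, cube n x -> cube n y ->
      (forall i, (i < n)%nat -> Rabs (y i - x i) < d) -> Rabs (Dpsi y O - Dpsi x O) < om.
Proof.
  intros Hn Hcont. apply heine. intros z Hz eps Heps.
  assert (HN : 1 <= INR n) by (replace 1 with (INR 1) by reflexivity; apply le_INR; auto).
  destruct (Hcont z (proj1 Hz) O ltac:(lia) eps Heps) as [d [Hd Hclose]].
  exists (d / INR n). split; [apply Rdiv_lt_0_compat; lra|].
  intros y Hy Hyz. apply Hclose; [apply Hy|]. apply normn_small; auto.
Qed.

Lemma rpow_nonneg (r a : R) : 0 <= rpow r a.
Proof. unfold rpow. destruct Req_EM_T; [destruct Req_EM_T; lra|]. left; apply exp_pos. Qed.

Lemma Rpower_ge_sq (s a : R) : 0 < s -> s <= 1 -> a <= 2 -> s ^ 2 <= Rpower s a.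
Proof.
  intros Hs Hs1 Ha. rewrite <- Rpower_pow by auto. unfold Rpower.
  assert (ln s <= 0).
  { destruct Hs1 as [Hlt|Heq]; [rewrite <- ln_1; left; apply ln_increasing; lra| subst; rewrite ln_1; lra]. }
  assert (E : INR 2 * ln s <= a * ln s) by (simpl INR; nra).
  destruct E as [E|E]; [left; apply exp_increasing; auto| rewrite E; lra].
Qed.

Lemma rpow_ge_sq (r a t : R) : Rabs t <= r -> Rabs t <= 1 -> 0 <= a <= 2 -> t ^ 2 <= rpow r a.
Proof.
  intros Hr H1 Ha. destruct (Req_dec t 0) as [E|E].
  { subst. replace (0 ^ 2) with 0 by ring. apply rpow_nonneg. }
  assert (Ht : 0 < Rabs t) by (apply Rabs_pos_lt; auto).
  unfold rpow. destruct (Req_EM_T r 0); [lra|].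
  rewrite <- pow2_abs. apply Rle_trans with (Rpower (Rabs t) a).
  - apply Rpower_ge_sq; lra.
  - destruct (Req_dec a 0) as [Ea|Ea]; [subst; rewrite !Rpower_O; lra|].
    apply Rle_Rpower_l; lra.
Qed.

Lemma rpow_ge_quarter (r b : R) : 1/4 <= r -> 0 <= b -> Rpower (1/4) b <= rpow r b.
Proof. intros Hr Hb. unfold rpow. destruct (Req_EM_T r 0); [lra|]. apply Rle_Rpower_l; lra. Qed.

Definition energy_density (n : nat) (d1 d2 : R) (psi : (nat -> R) -> R)
    (Dpsi : (nat -> R) -> nat -> R) (x : nat -> R) : R :=
  rpow (normn n x) (2 * d1) * sumN n (fun i => Dpsi x i ^ 2)
  + (PI / 2) ^ 2 * rpow (normn n x) (2 * d2) * psi x ^ 2.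

(* Lower bound for the weight [|x|^(2 d2)] where [|x0| >= 1/4]. *)
Definition outer_weight (d2 : R) : R := (PI / 2) ^ 2 * Rpower (1/4) (2 * d2).

Lemma outer_weight_pos (d2 : R) : 0 < outer_weight d2.
Proof.
  unfold outer_weight. apply Rmult_lt_0_compat; [|apply exp_pos].
  apply pow_lt. generalize PI_RGT_0. lra.
Qed.

Lemma energy_density_lower (n : nat) (d1 d2 : R) (psi : (nat -> R) -> R)
    (Dpsi : (nat -> R) -> nat -> R) (y : nat -> R) :
  (1 <= n)%nat -> 0 <= d1 < 1 -> 0 <= d2 -> Rabs (y O) <= 1 ->
  y O ^ 2 * Dpsi y O ^ 2 + outer_weight d2 * (outer (y O) * psi y ^ 2)
  <= energy_density n d1 d2 psi Dpsi y.
Proof.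
  intros Hn Hd1 Hd2 Hy. unfold energy_density, outer_weight. assert (Hno := normn_coord0 n y Hn).
  assert (A1 : y O ^ 2 <= rpow (normn n y) (2 * d1)) by (apply rpow_ge_sq; lra).
  assert (A2 : Dpsi y O ^ 2 <= sumN n (fun i => Dpsi y i ^ 2))
    by (apply (sumN_ge_first n (fun i => Dpsi y i ^ 2)); auto; intros; apply pow2_ge_0).
  assert (A3 : Rpower (1/4) (2 * d2) * outer (y O) <= rpow (normn n y) (2 * d2)).
  { unfold outer. destruct Rle_dec; [rewrite Rmult_1_r; apply rpow_ge_quarter; lra|].
    rewrite Rmult_0_r. apply rpow_nonneg. }
  assert (0 <= y O ^ 2) by apply pow2_ge_0. assert (0 <= Dpsi y O ^ 2) by apply pow2_ge_0.
  assert (0 <= psi y ^ 2) by apply pow2_ge_0. assert (0 <= (PI / 2) ^ 2) by apply pow2_ge_0.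
  apply Rplus_le_compat; [apply Rmult_le_compat; auto|].
  replace ((PI / 2) ^ 2 * Rpower (1 / 4) (2 * d2) * (outer (y O) * psi y ^ 2))
    with ((PI / 2) ^ 2 * (Rpower (1 / 4) (2 * d2) * outer (y O)) * psi y ^ 2) by ring.
  apply Rmult_le_compat_r; auto. apply Rmult_le_compat_l; auto.
Qed.

Definition hardy_const (d2 : R) : R := 64 + 8 / outer_weight d2.

Lemma hardy_const_pos (d2 : R) : 0 < hardy_const d2.
Proof.
  unfold hardy_const. assert (0 < 8 / outer_weight d2) by (apply Rdiv_lt_0_compat; [lra| apply outer_weight_pos]).
  lra.
Qed.

Lemma hardy_const_dominates (d2 a b : R) : 0 <= a -> 0 <= b ->
  64 * a + 8 * b <= hardy_const d2 * (a + outer_weight d2 * b).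
Proof.
  intros Ha Hb. assert (Hw := outer_weight_pos d2). unfold hardy_const.
  assert (E : (64 + 8 / outer_weight d2) * (a + outer_weight d2 * b)
              = 64 * a + 8 * b + (64 * outer_weight d2 * b + 8 / outer_weight d2 * a))
    by (field; lra).
  rewrite E. assert (0 <= 8 / outer_weight d2) by (left; apply Rdiv_lt_0_compat; lra).
  assert (0 <= 64 * outer_weight d2 * b) by (apply Rmult_le_pos; lra).
  assert (0 <= 8 / outer_weight d2 * a) by (apply Rmult_le_pos; lra). lra.
Qed.

Section Lines.

Variables (n : nat) (psi : (nat -> R) -> R) (Dpsi : (nat -> R) -> nat -> R).
Hypothesis n_pos : (1 <= n)%nat.
Hypothesis psi_partial : forall x, in_Rn n x -> forall i, (i < n)%nat ->
  derivable_pt_lim (fun t => psi (upd x i t)) (x i) (Dpsi x i).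

Variables (om d : R).
Hypothesis partial_modulus : forall x y, cube n x -> cube n y ->
  (forall i, (i < n)%nat -> Rabs (y i - x i) < d) -> Rabs (Dpsi y O - Dpsi x O) < om.

(* By the mean value theorem, on a grid line fine enough for the modulus [d],
   the increments of [psi] are [h] times the partial derivative at the endpoint
   farther from 0, up to an error [om]. *)
Lemma line_increments (m : nat) (x : nat -> R) :
  2 / INR (S m) <= d -> cube n x ->
  forall k, (k < m)%nat -> exists e j, Rabs e <= om /\ (j = k \/ j = S k) /\
    Rabs (mid (S m) k) <= Rabs (mid (S m) j) /\ Rabs (mid (S m) (S k)) <= Rabs (mid (S m) j) /\
    psi (upd x O (mid (S m) (S k))) - psi (upd x O (mid (S m) k))
      = 2 / INR (S m) * (Dpsi (upd x O (mid (S m) j)) O + e).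
Proof.
  intros Hd Hx k Hk.
  set (t := mid (S m)). set (h := 2 / INR (S m)) in *.
  assert (Hts : t (S k) = t k + h) by (apply mid_S; lia).
  assert (Hh : 0 < h) by (apply Rdiv_lt_0_compat; [lra| apply lt_0_INR; lia]).
  assert (Htk := mid_in (S m) k ltac:(lia)). assert (Htk1 := mid_in (S m) (S k) ltac:(lia)).
  fold t in Htk, Htk1.
  assert (Hline : forall s, -1 <= s <= 1 -> cube n (upd x O s)) by (intros; apply cube_upd; auto; lia).
  destruct (MVT_cor2 (fun s => psi (upd x O s)) (fun s => Dpsi (upd x O s) O) (t k) (t (S k)))
    as [xi [Hmvt Hxi]]; [lra| |].
  { intros s Hs. assert (Hder := psi_partial (upd x O s) (proj1 (Hline s ltac:(lra))) O ltac:(lia)).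
    rewrite upd_eq in Hder.
    replace (fun s' => psi (upd x O s')) with (fun s' => psi (upd (upd x O s) O s')); auto.
    apply functional_extensionality; intros s'. rewrite upd_upd. reflexivity. }
  assert (Hnear : forall a, -1 <= a <= 1 -> Rabs (a - xi) < h ->
                  Rabs (Dpsi (upd x O a) O - Dpsi (upd x O xi) O) < om).
  { intros a Ha Hxa. apply partial_modulus; [apply Hline; lra| apply Hline; auto|].
    intros i Hi. unfold upd. destruct (Nat.eqb i O); [lra|]. rewrite Rminus_diag, Rabs_R0. lra. }
  cbv beta in Hmvt. rewrite Hts in Hmvt. replace (t k + h - t k) with h in Hmvt by ring.
  destruct (Rle_dec (Rabs (t k)) (Rabs (t (S k)))) as [Hle|Hle].
  - exists (Dpsi (upd x O xi) O - Dpsi (upd x O (t (S k))) O), (S k).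
    split; [|split; [right; reflexivity| split; [lra| split; [lra| rewrite Hts, Hmvt; ring]]]].
    left. rewrite <- Rabs_Ropp, Ropp_minus_distr. apply Hnear; auto.
    rewrite Hts. unfold Rabs; destruct Rcase_abs; lra.
  - exists (Dpsi (upd x O xi) O - Dpsi (upd x O (t k)) O), k.
    split; [|split; [left; reflexivity| split; [lra| split; [lra| rewrite Hts, Hmvt; ring]]]].
    left. rewrite <- Rabs_Ropp, Ropp_minus_distr. apply Hnear; auto.
    unfold Rabs; destruct Rcase_abs; lra.
Qed.

Lemma line_bound (d1 d2 : R) (m : nat) (x : nat -> R) :
  0 <= d1 < 1 -> 0 <= d2 -> (15 <= m)%nat -> 2 / INR (S m) <= d -> cube n x ->
  sumN (S m) (fun k => psi (upd x O (mid (S m) k)) ^ 2) <=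
  sumN (S m) (fun k => hardy_const d2 * energy_density n d1 d2 psi Dpsi (upd x O (mid (S m) k))
                       + 32 * om ^ 2).
Proof.
  intros Hd1 Hd2 Hm Hd Hx.
  set (t := mid (S m)).
  set (f := fun k => psi (upd x O (t k))). set (g := fun k => Dpsi (upd x O (t k)) O).
  assert (Hardy := discrete_hardy m Hm f g om (line_increments m x Hd Hx)).
  fold t in Hardy.
  rewrite sumN_plus, sumN_scal, sumN_const.
  eapply Rle_trans; [exact Hardy|].
  enough (64 * sumN (S m) (fun k => t k ^ 2 * g k ^ 2) + 8 * sumN (S m) (fun k => outer (t k) * f k ^ 2)
          <= hardy_const d2 * sumN (S m) (fun k => energy_density n d1 d2 psi Dpsi (upd x O (t k))))
    by lra.
  rewrite <- !sumN_scal, <- sumN_plus. apply sumN_le. intros k Hk.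
  eapply Rle_trans; [apply hardy_const_dominates|].
  - apply Rmult_le_pos; apply pow2_ge_0.
  - apply Rmult_le_pos; [apply outer_nonneg| apply pow2_ge_0].
  - apply Rmult_le_compat_l; [left; apply hardy_const_pos|].
    assert (Htk := mid_in (S m) k Hk). fold t in Htk.
    assert (Hlow := energy_density_lower n d1 d2 psi Dpsi (upd x O (t k)) n_pos Hd1 Hd2).
    rewrite upd_eq in Hlow. apply Hlow. unfold Rabs; destruct Rcase_abs; lra.
Qed.

End Lines.

Lemma riemann_sum_bound (n : nat) (d1 d2 : R) (psi : (nat -> R) -> R)
    (Dpsi : (nat -> R) -> nat -> R) :
  (1 <= n)%nat -> 0 <= d1 < 1 -> 0 <= d2 ->
  (forall x, in_Rn n x -> forall i, (i < n)%nat ->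
      derivable_pt_lim (fun t => psi (upd x i t)) (x i) (Dpsi x i)) ->
  (forall om, 0 < om -> exists d, 0 < d /\ forall x y, cube n x -> cube n y ->
      (forall i, (i < n)%nat -> Rabs (y i - x i) < d) -> Rabs (Dpsi y O - Dpsi x O) < om) ->
  forall om, 0 < om -> exists N0, forall N, (N0 <= N)%nat ->
    (2 / INR (S N)) ^ n * gridsum n (S N) (fun x => psi x ^ 2) <=
    hardy_const d2 * ((2 / INR (S N)) ^ n * gridsum n (S N) (energy_density n d1 d2 psi Dpsi))
    + 2 ^ n * 32 * om ^ 2.
Proof.
  intros Hn Hd1 Hd2 Hder Hunif om Hom.
  destruct (Hunif om Hom) as [d [Hd Hmod]].
  destruct (INR_unbounded (2 / d)) as [N1 HN1].
  exists (Nat.max 15 N1). intros N HN.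
  assert (HSN : 0 < INR (S N)) by (apply lt_0_INR; lia).
  assert (Hfine : 2 / INR (S N) <= d).
  { assert (INR N1 <= INR (S N)) by (apply le_INR; lia).
    apply Rmult_le_reg_r with (INR (S N)); auto. unfold Rdiv. rewrite Rmult_assoc, Rinv_l by lra.
    assert (2 / d * d = 2) by (field; lra). nra. }
  assert (Hgrid : gridsum n (S N) (fun x => psi x ^ 2) <=
      gridsum n (S N) (fun x => hardy_const d2 * energy_density n d1 d2 psi Dpsi x + 32 * om ^ 2)).
  { apply (gridsum_by_lines n (S N) n); [lia|]. intros x Hx.
    apply (line_bound n psi Dpsi Hn Hder om d Hmod); auto; lia. }
  rewrite gridsum_affine in Hgrid.
  assert (Hp : 0 <= (2 / INR (S N)) ^ n) by (apply pow_le; left; apply Rdiv_lt_0_compat; lra).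
  assert (Hscaled := Rmult_le_compat_l _ _ _ Hp Hgrid).
  assert (E : (2 / INR (S N)) ^ n * INR (S N) ^ n = 2 ^ n).
  { rewrite <- Rpow_mult_distr. f_equal. field. lra. }
  eapply Rle_trans; [exact Hscaled|]. right.
  rewrite Rmult_plus_distr_l, <- E. ring.
Qed.

Lemma Un_cv_const (c : R) : Un_cv (fun _ => c) c.
Proof. intros eps Heps. exists O. intros. unfold R_dist. rewrite Rminus_diag, Rabs_R0. auto. Qed.

Lemma Un_cv_le_eventually (u v : nat -> R) (lu lv : R) (N0 : nat) :
  Un_cv u lu -> Un_cv v lv -> (forall N, (N0 <= N)%nat -> u N <= v N) -> lu <= lv.
Proof.
  intros Hu Hv Huv. apply (Rle_cv_lim (Un := fun N => u (N + N0)%nat) (Vn := fun N => v (N + N0)%nat)).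
  - intros N. apply Huv. lia.
  - apply CV_shift'; auto.
  - apply CV_shift'; auto.
Qed.

Lemma le_of_le_plus_sq (a b C : R) : 0 < C -> (forall om, 0 < om -> a <= b + C * om ^ 2) -> a <= b.
Proof.
  intros HC H. apply Rle_plus_epsilon. intros eps Heps.
  assert (Hq : 0 < eps / C) by (apply Rdiv_lt_0_compat; auto).
  specialize (H (sqrt (eps / C)) (sqrt_lt_R0 _ Hq)).
  rewrite pow2_sqrt in H by lra. replace (C * (eps / C)) with eps in H by (field; lra). auto.
Qed.

Theorem lemma3p2 (n : nat) (d1 d2 : R)
  (hn : (1 <= n)%nat) (hd1 : 0 <= d1 < 1) (hd2 : 0 <= d2)
  (hcase : (2 <= n)%nat \/ (n = 1%nat /\ d1 < 1/2)) :
  exists lam : R, 0 < lam /\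
    forall (psi : (nat -> R) -> R) (Dpsi : (nat -> R) -> nat -> R),
      C1c n psi Dpsi ->
      forall IL IR : R,
        cube_int n (fun x => rpow (normn n x) (2 * d1) * sumN n (fun i => Dpsi x i ^ 2)
                             + (PI / 2) ^ 2 * rpow (normn n x) (2 * d2) * psi x ^ 2) IL ->
        cube_int n (fun x => psi x ^ 2) IR ->
        IL >= lam * IR.
Proof.
  assert (HLam := hardy_const_pos d2).
  exists (/ hardy_const d2). split; [apply Rinv_0_lt_compat; auto|].
  intros psi Dpsi [Hder [Hcont _]] IL IR HL HR.
  change (cube_int n (energy_density n d1 d2 psi Dpsi) IL) in HL.
  assert (Hunif := partial_uniform_continuity n Dpsi hn Hcont).
  assert (Hbound : IR <= hardy_const d2 * IL).
  { apply (le_of_le_plus_sq _ _ (2 ^ n * 32)); [apply Rmult_lt_0_compat; [apply pow_lt|]; lra|].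
    intros om Hom.
    destruct (riemann_sum_bound n d1 d2 psi Dpsi hn hd1 hd2 Hder Hunif om Hom) as [N0 HN0].
    refine (Un_cv_le_eventually _ _ _ _ N0 HR _ HN0).
    apply CV_plus; [apply CV_mult; [apply Un_cv_const| exact HL]| apply Un_cv_const]. }
  apply Rle_ge. apply Rmult_le_reg_l with (hardy_const d2); auto.
  rewrite <- Rmult_assoc, Rinv_r by lra. lra.
Qed.
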